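(* Let $\mathcal{G}$ be an anonymous polymatrix $N$-player game with common action set $\mathbb{A}$, and let $\bar r^i$ be the functions with $r^i(a^i,a^{-i})=\bar r^i(a^i,\sigma(a^{-i}))$. Let $(\alpha_k)_{k\ge1}$ be any step-size sequence in $(0,1]$ and let $(a_l)_{l\ge0}$ be any sequence of joint actions in $\mathbb{A}^{\otimes N}$. Define, for all $i,j\in[N]$, $\hat\pi^j_0=\mathds{1}\{a^j_0\}$, $\hat\pi^j_k=\hat\pi^j_{k-1}+\alpha_k(\mathds{1}\{a^j_k\}-\hat\pi^j_{k-1})$, and $\hat\mu^i_0=\mathds{1}\{\sigma(a^{-i}_0)\}$, $\hat\mu^i_k=\hat\mu^i_{k-1}+\alpha_k(\mathds{1}\{\sigma(a^{-i}_k)\}-\hat\mu^i_{k-1})$ for $k\ge1$. Then for every $k\ge0$, every agent $i$ and every $a^i\in\mathbb{A}$, $$\bar R^i(a^i,\hat\mu^i_k)=R^i(a^i,\hat\pi^{-i}_k).$$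
   Context: A game is polymatrix if for each $i$ there are functions $r^{ij}:\mathbb{A}^i\times\mathbb{A}^j\to\mathbb{R}$, $j\neq i$, with $r^i(a^i,a^{-i})=\sum_{j\neq i}r^{ij}(a^i,a^j)$ for all $a$. Anonymous: common action set $\mathbb{A}$ ($|\mathbb{A}|=n$), each $r^i(a^i,a^{-i})$ invariant under permutations of $a^{-i}$. $\mathds{1}\{y\}$ denotes the basis vector indexed by $y$ (in $\mathbb{R}^n$ for $y\in\mathbb{A}$, in $\mathbb{R}^{|\mathbb{X}|}$ for $y\in\mathbb{X}$). $\sigma(a^{-i}):=\sum_{j\neq i}\mathds{1}\{a^j\}\in\mathbb{X}:=\{\xi\in\mathbb{N}^n:\sum_l\xi_l=N-1\}$. $R^i(a^i,\pi^{-i}):=\sum_{a^{-i}}r^i(a^i,a^{-i})\prod_{j\ne i}\pi^j(a^j)$ and $\bar R^i(a^i,\mu):=\sum_{x\in\mathbb{X}}\bar r^i(a^i,x)\mu(x)$. *)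

From HB Require Import structures.
From mathcomp Require Import all_boot all_order all_algebra all_fingroup.
Set Implicit Arguments. Unset Strict Implicit. Unset Printing Implicit Defensive.
Import Order.TTheory GRing.Theory Num.Theory.
Local Open Scope ring_scope.

(* Count vectors xi (occupation numbers of actions) are elements of
   {ffun A -> 'I_N.+1} (each count is at most N); the set X of the paper is
   the subset of those whose counts sum to N - 1. *)

Definition joint (N : nat) (A : finType) := {ffun 'I_N -> A}.
Definition cvec (N : nat) (A : finType) := {ffun A -> 'I_N.+1}.

Definition Xset (N : nat) (A : finType) : {set cvec N A} :=
  [set x : cvec N A | (\sum_(l : A) (x l : nat) == N.-1)%N].

Definition sigma (N : nat) (A : finType) (i : 'I_N) (a : joint N A) : cvec N A :=
  [ffun l : A => inord #|[set j : 'I_N | (j != i) && (a j == l)]|].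

Definition polymatrix (R : realFieldType) (N : nat) (A : finType)
  (r : 'I_N -> joint N A -> R) : Prop :=
  exists rij : 'I_N -> 'I_N -> A -> A -> R,
    forall (i : 'I_N) (a : joint N A),
      r i a = \sum_(j : 'I_N | j != i) rij i j (a i) (a j).

(* anonymous game: r^i(a^i, a^{-i}) invariant under permutations of a^{-i},
   i.e. under permutations of the players fixing i *)
Definition anonymous (R : realFieldType) (N : nat) (A : finType)
  (r : 'I_N -> joint N A -> R) : Prop :=
  forall (i : 'I_N) (s : {perm 'I_N}), s i = i ->
    forall a : joint N A, r i [ffun j => a (s j)] = r i a.

Definition Rexp (R : realFieldType) (N : nat) (A : finType)
  (r : 'I_N -> joint N A -> R) (i : 'I_N) (ai : A) (pi : 'I_N -> A -> R) : R :=
  \sum_(b : joint N A | b i == ai) r i b * \prod_(j : 'I_N | j != i) pi j (b j).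

Definition Rbar (R : realFieldType) (N : nat) (A : finType)
  (rbar : 'I_N -> A -> cvec N A -> R) (i : 'I_N) (ai : A) (mu : cvec N A -> R) : R :=
  \sum_(x in Xset N A) rbar i ai x * mu x.

Fixpoint pihat (R : realFieldType) (N : nat) (A : finType)
  (alpha : nat -> R) (a : nat -> joint N A) (j : 'I_N) (k : nat) : A -> R :=
  match k with
  | 0 => fun l => ((a 0%N j) == l)%:R
  | k'.+1 => fun l => pihat alpha a j k' l
                 + alpha k * (((a k j) == l)%:R - pihat alpha a j k' l)
  end.

Fixpoint muhat (R : realFieldType) (N : nat) (A : finType)
  (alpha : nat -> R) (a : nat -> joint N A) (i : 'I_N) (k : nat) : cvec N A -> R :=
  match k with
  | 0 => fun x => (sigma i (a 0%N) == x)%:R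
  | k'.+1 => fun x => muhat alpha a i k' x
                 + alpha k * ((sigma i (a k) == x)%:R - muhat alpha a i k' x)
  end.

From HB Require Import structures.
From mathcomp Require Import all_boot all_order all_algebra all_fingroup.
From mathcomp Require Import ring.
Import Order.TTheory GRing.Theory Num.Theory.
Local Open Scope ring_scope.

(* Since the game is polymatrix and each pi^j is a probability vector, the
   expectation R^i(a^i, pi^{-i}) collapses to sum_{j <> i} E_{pi^j} r^{ij}(a^i, .),
   which is linear in the family (pi^j)_j, just as bar R^i(a^i, mu) is linear in
   mu. Both estimators follow the same affine update, so by induction it suffices
   to compare the two sides on point masses at a joint action b, where both equal
   r^i(a^i, b^{-i}) = rbar^i(a^i, sigma(b^{-i})). *)

Section AffineUpdate.

Context {R : comPzRingType}.

Lemma sum_mul_indicator {T : finType} (P : pred T) (x0 : T) (f : T -> R) :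
  P x0 -> \sum_(x | P x) f x * (x0 == x)%:R = f x0.
Proof.
move=> Px0; rewrite (bigD1 x0) //= eqxx mulr1 big1 ?addr0 // => x /andP [_ hx].
by rewrite eq_sym (negbTE hx) mulr0.
Qed.

Lemma sum_indicator {T : finType} (x0 : T) : \sum_x (x0 == x)%:R = 1 :> R.
Proof.
by rewrite (bigD1 x0) //= eqxx big1 ?addr0 // => x; rewrite eq_sym => /negbTE ->.
Qed.

Lemma sumr_affine {T : finType} (P : pred T) (al : R) (U V : T -> R) :
  \sum_(x | P x) (U x + al * (V x - U x)) =
  \sum_(x | P x) U x + al * (\sum_(x | P x) V x - \sum_(x | P x) U x).
Proof. by rewrite -sumrB mulr_sumr -big_split. Qed.

Lemma mulr_affine (f u v al : R) :
  f * (u + al * (v - u)) = f * u + al * (f * v - f * u).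
Proof. by ring. Qed.

End AffineUpdate.

Lemma pihat_sum1 (R : realFieldType) (N : nat) (A : finType)
  (alpha : nat -> R) (a : nat -> joint N A) (j : 'I_N) (k : nat) :
  \sum_c pihat alpha a j k c = 1.
Proof.
elim: k => [|k IH] /=; first exact: sum_indicator.
by rewrite sumr_affine IH sum_indicator subrr mulr0 addr0.
Qed.

Lemma sigma_in_Xset {N : nat} {A : finType} (i : 'I_N) (a : joint N A) :
  sigma i a \in Xset N A.
Proof.
rewrite inE; apply/eqP.
have -> : (\sum_(l : A) (sigma i a l : nat) =
           \sum_(l : A) \sum_(j | (j != i) && (a j == l)) 1)%N.
  apply: eq_bigr => l _; rewrite ffunE inordK; last first.
    by apply: leq_ltn_trans (max_card _) _; rewrite card_ord.
  by rewrite sum1_card cardsE.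
rewrite -(partition_big (P := fun j => j != i) a xpredT) // sum1_card.
by rewrite cardC1 card_ord.
Qed.

Lemma sigma_set_own {N : nat} {A : finType} (i : 'I_N) (a : joint N A) (ai : A) :
  sigma i [ffun m => if m == i then ai else a m] = sigma i a.
Proof.
apply/ffunP => l; rewrite !ffunE; congr inord; apply: eq_card => j.
by rewrite !inE ffunE; case: eqP.
Qed.

Section Polymatrix.

Context {R : realFieldType} {N : nat} {A : finType}.
Context {r : 'I_N -> joint N A -> R} {rij : 'I_N -> 'I_N -> A -> A -> R}.
Hypothesis r_polymatrix :
  forall (i : 'I_N) (a : joint N A), r i a = \sum_(j | j != i) rij i j (a i) (a j).

(* The j-th summand is a sum over b of a product of one-player factors [G m (b m)];
   swapping sum and product, every factor other than those of i and j sums to 1. *)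
Lemma Rexp_polymatrix (i : 'I_N) (ai : A) (pi : 'I_N -> A -> R) :
  (forall j, \sum_c pi j c = 1) ->
  Rexp r i ai pi = \sum_(j | j != i) \sum_c rij i j ai c * pi j c.
Proof.
move=> pi_sum1; rewrite /Rexp.
under eq_bigr => b /eqP bi do rewrite r_polymatrix bi mulr_suml.
rewrite exchange_big /=; apply: eq_bigr => j ji.
pose G (m : 'I_N) (c : A) : R := if m == i then (c == ai)%:R else
               if m == j then rij i j ai c * pi j c else pi m c.
have Gi c : G i c = (c == ai)%:R by rewrite /G eqxx.
have Gj c : G j c = rij i j ai c * pi j c by rewrite /G (negbTE ji) eqxx.
have Gm m c : m != i -> m != j -> G m c = pi m c.
  by move=> mi mj; rewrite /G (negbTE mi) (negbTE mj).
clearbody G.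
have sum_prodG : \sum_(b : joint N A) \prod_m G m (b m) =
   \sum_(b : joint N A | b i == ai) rij i j ai (b j) * \prod_(m | m != i) pi m (b m).
  rewrite [RHS]big_mkcond; apply: eq_bigr => b _.
  rewrite (bigD1 i) //= Gi; case: eqP => _; [rewrite mul1r | by rewrite mul0r].
  rewrite (bigD1 j) //= [in RHS](bigD1 j) //= Gj -mulrA; congr (_ * (_ * _)).
  by apply: eq_bigr => m /andP [mi mj]; rewrite Gm.
rewrite -sum_prodG -(bigA_distr_bigA G) /= (bigD1 i) //= (bigD1 j) //=.
rewrite (eq_bigr _ (fun c _ => Gi c)) (eq_bigr _ (fun c _ => Gj c)).
rewrite [X in _ * (_ * X)]big1 => [|m /andP [mi mj]]; last first.
  by rewrite (eq_bigr _ (fun c _ => Gm m c mi mj)); exact: pi_sum1.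
under [X in X * _]eq_bigr do rewrite eq_sym.
by rewrite sum_indicator mul1r mulr1.
Qed.

Context {rbar : 'I_N -> A -> cvec N A -> R}.
Hypothesis r_rbar : forall (i : 'I_N) (a : joint N A), r i a = rbar i (a i) (sigma i a).

Lemma polymatrix_rbar (i : 'I_N) (ai : A) (b : joint N A) :
  \sum_(j | j != i) rij i j ai (b j) = rbar i ai (sigma i b).
Proof.
set b' := [ffun m => if m == i then ai else b m].
have b'i : b' i = ai by rewrite ffunE eqxx.
rewrite -(sigma_set_own i b ai) -/b' -{2}b'i -r_rbar r_polymatrix b'i.
by apply: eq_bigr => j ji; rewrite ffunE (negbTE ji).
Qed.

End Polymatrix.

Theorem lemma3 (R : realFieldType) (N : nat) (A : finType)
  (r : 'I_N -> joint N A -> R)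
  (rbar : 'I_N -> A -> cvec N A -> R)
  (Hpoly : polymatrix r) (Hanon : anonymous r)
  (Hrbar : forall (i : 'I_N) (a : joint N A), r i a = rbar i (a i) (sigma i a))
  (alpha : nat -> R)
  (Halpha : forall k : nat, (0 < k)%N -> 0 < alpha k <= 1)
  (a : nat -> joint N A) :
  forall (k : nat) (i : 'I_N) (ai : A),
    Rbar rbar i ai (muhat alpha a i k) = Rexp r i ai (fun j => pihat alpha a j k).
Proof.
move=> k i ai; case: Hpoly => rij Hr.
rewrite /Rbar (Rexp_polymatrix Hr) => [|j]; last exact: pihat_sum1.
have Rbar_point b :
    \sum_(x in Xset N A) rbar i ai x * (sigma i b == x)%:R = rbar i ai (sigma i b).
  exact: sum_mul_indicator (sigma_in_Xset i b).
have Rexp_point (b : joint N A) :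
    \sum_(j | j != i) \sum_c rij i j ai c * (b j == c)%:R = rbar i ai (sigma i b).
  rewrite -(polymatrix_rbar Hr Hrbar); apply: eq_bigr => j _.
  exact: (sum_mul_indicator xpredT).
elim: k => [|k IH] /=; first by rewrite Rbar_point Rexp_point.
under eq_bigr do rewrite (@mulr_affine R).
rewrite sumr_affine IH Rbar_point.
under eq_bigr do (under eq_bigr do rewrite (@mulr_affine R); rewrite sumr_affine).
by rewrite sumr_affine Rexp_point.
Qed.
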